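(* Let $(\mathcal{S},\mathcal{R})$ be a complete positive presentation satisfying: (C) $\mathcal{R}$ contains no relation of the form $su=sv$ or $us=vs$ with $s\in\mathcal{S}$, $u,v\in\mathcal{S}^*$ and $u\neq v$; (E$_r$) there exists a set $\mathcal{S}'$ with $\mathcal{S}\subseteq\mathcal{S}'\subseteq\mathcal{S}^*$ such that for all $u,v\in\mathcal{S}'$ there exist $u',v'\in\mathcal{S}'$ satisfying $(uv')^{-1}(vu')\curvearrowright_r\varepsilon$. Then for every word $\mathbf{w}$ on $\mathcal{S}\cup\mathcal{S}^{-1}$ the following are equivalent: (i) $\mathbf{w}\equiv^{\pm}\varepsilon$; (ii) there exist $u,v\in\mathcal{S}^*$ with $\mathbf{w}\curvearrowright_r vu^{-1}$ and $u^{-1}v\curvearrowright_r\varepsilon$; (iii) there exist $u,v\in\mathcal{S}^*$ with $\mathbf{w}\curvearrowright_r vu^{-1}$ and $vu^{-1}\curvearrowright_l\varepsilon$.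
   Context: A positive presentation is a pair $(\mathcal{S},\mathcal{R})$ where $\mathcal{S}$ is a nonempty set of letters and $\mathcal{R}$ is a family of relations $u=v$, i.e. unordered pairs $\{u,v\}$ of nonempty words in the free monoid $\mathcal{S}^*$ (letters are regarded as length-one words). $\varepsilon$ denotes the empty word; $\equiv$ is the smallest congruence on $\mathcal{S}^*$ containing all pairs of $\mathcal{R}$. Let $\mathcal{S}^{-1}=\{s^{-1}:s\in\mathcal{S}\}$ be a disjoint copy of $\mathcal{S}$; $\equiv^{\pm}$ is the smallest congruence on $(\mathcal{S}\cup\mathcal{S}^{-1})^*$ containing all pairs of $\mathcal{R}$ and all pairs $\{ss^{-1},\varepsilon\}$, $\{s^{-1}s,\varepsilon\}$ for $s\in\mathcal{S}$. For $u\in\mathcal{S}^*$, $u^{-1}$ is obtained by reversing the order of the letters of $u$ and replacing each $s$ by $s^{-1}$. Right reversing: $\mathbf{w}\curvearrowright_r\mathbf{w}'$ (words on $\mathcal{S}\cup\mathcal{S}^{-1}$) if $\mathbf{w}'$ is obtained from $\mathbf{w}$ by finitely many steps, each deleting a subword $u^{-1}u$ ($u\in\mathcal{S}^*$ nonempty) or replacing a subword $u^{-1}v$ ($u,v\in\mathcal{S}^*$ nonempty) by $v'u'^{-1}$ where $uv'=vu'$ is a relation of $\mathcal{R}$. Left reversing: $\mathbf{w}\curvearrowright_l\mathbf{w}'$ if $\mathbf{w}'$ is obtained by finitely many steps, each deleting a subword $uu^{-1}$ ($u$ nonempty) or replacing a subword $uv^{-1}$ ($u,v$ nonempty) by $v'^{-1}u'$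 where $v'u=u'v$ is a relation of $\mathcal{R}$. $(\mathcal{S},\mathcal{R})$ is $r$-complete if for all $u,v,u',v'\in\mathcal{S}^*$ with $uv'\equiv vu'$ there exist $u'',v'',w\in\mathcal{S}^*$ with $u^{-1}v\curvearrowright_r v''u''^{-1}$, $u'\equiv u''w$, $v'\equiv v''w$; it is $l$-complete if for all $u,v,u',v'$ with $v'u\equiv u'v$ there exist $u'',v'',w$ with $uv^{-1}\curvearrowright_l v''^{-1}u''$, $u'\equiv wu''$, $v'\equiv wv''$; it is complete if it is both. *)

From Stdlib Require Import List Relations.
Import ListNotations.
Set Implicit Arguments.

Section Pres.
Variable S : Type.
(* A family of relations: R u v means the (unordered) relation u = v is in the family. *)
Variable R : list S -> list S -> Prop.

Definition isrel (u v : list S) : Prop := R u v \/ R v u.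

Inductive sletter : Type := Pos (s : S) | Neg (s : S).

Definition pos (u : list S) : list sletter := map Pos u.
Definition inv (u : list S) : list sletter := rev (map Neg u).

Inductive equiv : list S -> list S -> Prop :=
| eq_rel : forall a b u v, isrel u v -> equiv (a ++ u ++ b) (a ++ v ++ b)
| eq_refl : forall u, equiv u u
| eq_sym : forall u v, equiv u v -> equiv v u
| eq_trans : forall u v w, equiv u v -> equiv v w -> equiv u w.

Inductive equivpm : list sletter -> list sletter -> Prop :=
| eqpm_rel : forall a b u v, isrel u v -> equivpm (a ++ pos u ++ b) (a ++ pos v ++ b)
| eqpm_cancel1 : forall a b s, equivpm (a ++ [Pos s; Neg s] ++ b) (a ++ b)
| eqpm_cancel2 : forall a b s, equivpm (a ++ [Neg s; Pos s] ++ b) (a ++ b)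
| eqpm_refl : forall w, equivpm w w
| eqpm_sym : forall w w', equivpm w w' -> equivpm w' w
| eqpm_trans : forall w1 w2 w3, equivpm w1 w2 -> equivpm w2 w3 -> equivpm w1 w3.

Inductive rstep : list sletter -> list sletter -> Prop :=
| rs_del : forall a b u, u <> [] -> rstep (a ++ inv u ++ pos u ++ b) (a ++ b)
| rs_rel : forall a b u v u' v', u <> [] -> v <> [] -> isrel (u ++ v') (v ++ u') ->
    rstep (a ++ inv u ++ pos v ++ b) (a ++ pos v' ++ inv u' ++ b).

Inductive lstep : list sletter -> list sletter -> Prop :=
| ls_del : forall a b u, u <> [] -> lstep (a ++ pos u ++ inv u ++ b) (a ++ b)
| ls_rel : forall a b u v u' v', u <> [] -> v <> [] -> isrel (v' ++ u) (u' ++ v) ->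
    lstep (a ++ pos u ++ inv v ++ b) (a ++ inv v' ++ pos u' ++ b).

Definition rrev : list sletter -> list sletter -> Prop := clos_refl_trans _ rstep.
Definition lrev : list sletter -> list sletter -> Prop := clos_refl_trans _ lstep.

Definition r_complete : Prop :=
  forall u v u' v', equiv (u ++ v') (v ++ u') ->
    exists u'' v'' w, rrev (inv u ++ pos v) (pos v'' ++ inv u'')
      /\ equiv u' (u'' ++ w) /\ equiv v' (v'' ++ w).

Definition l_complete : Prop :=
  forall u v u' v', equiv (v' ++ u) (u' ++ v) ->
    exists u'' v'' w, lrev (pos u ++ inv v) (inv v'' ++ pos u'')
      /\ equiv u' (w ++ u'') /\ equiv v' (w ++ v'').

Definition complete : Prop := r_complete /\ l_complete.

Definition cond_C : Prop :=
  (forall s u v, isrel (s :: u) (s :: v) -> u = v) /\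
  (forall s u v, isrel (u ++ [s]) (v ++ [s]) -> u = v).

Definition cond_Er : Prop :=
  exists S' : list S -> Prop, (forall s, S' [s]) /\
    forall u v, S' u -> S' v -> exists u' v', S' u' /\ S' v' /\
      rrev (inv (u ++ v') ++ pos (v ++ u')) [].

End Pres.

Definition positive_presentation (S : Type) (R : list S -> list S -> Prop) : Prop :=
  inhabited S /\ forall u v, R u v -> u <> [] /\ v <> [].

(* Reversing only replaces a word by ≡±-equivalent ones, and reading [u^-1 v ↷_r ε]
   as a computation in the monoid S^*/≡ shows [u ≡ v]; so (ii) and (iii) imply (i).
   Conversely, (E_r) gives any two words a common right multiple, so by r-completeness
   every word right-reverses to some [v u^-1]. Under (C) the word [s^-1 s] can only
   reverse to some [x x^-1], so completeness makes S^*/≡ cancellative; by Ore's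
   theorem it then embeds in its group of fractions, which is the group presented by
   (S, R). Hence [w ≡± ε] forces [v ≡ u], and completeness turns [u ≡ v] into
   [u^-1 v ↷_r ε] and [v u^-1 ↷_l ε]. *)

From Pilot Require Import Defs.
From Stdlib Require Import List Relations Setoid Morphisms Lia IndefiniteDescription.
Import ListNotations.

Section SeparatedMaps.
Variables (A T : Type) (f g : A -> T).
Hypothesis f_neq_g : forall x y, f x <> g y.

Lemma map_app_map_no_factor l1 l2 a b s t : map f l1 ++ map g l2 <> a ++ g s :: f t :: b.
Proof.
  revert a; induction l1 as [|x l1 IH]; intros a H; simpl in H.
  - assert (Hin : In (f t) (map g l2)) by (rewrite H; apply in_or_app; simpl; auto).
    apply in_map_iff in Hin as [y [Hy _]]; now apply (f_neq_g t y).
  - destruct a as [|z a]; simpl in H; injection H as Hx H.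
    + exact (f_neq_g x s Hx).
    + exact (IH a H).
Qed.

Hypothesis f_inj : forall x y, f x = f y -> x = y.
Hypothesis g_inj : forall x y, g x = g y -> x = y.

Lemma map_app_map_inj l1 l2 l1' l2' :
  map f l1 ++ map g l2 = map f l1' ++ map g l2' -> l1 = l1' /\ l2 = l2'.
Proof.
  revert l1'; induction l1 as [|x l1 IH]; intros [|x' l1'] H; simpl in H.
  - split; [reflexivity|]; revert l2' H; induction l2 as [|y l2 IH2]; intros [|y' l2'] H;
      simpl in H; try discriminate; [reflexivity|].
    injection H as Hy H; f_equal; auto.
  - destruct l2 as [|y l2]; [discriminate|]; injection H as Hy _; now destruct (f_neq_g x' y).
  - destruct l2' as [|y l2']; [discriminate|]; injection H as Hy _; now destruct (f_neq_g x y).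
  - injection H as Hx H; apply IH in H as [-> ->]; apply f_inj in Hx as ->; auto.
Qed.

End SeparatedMaps.

Lemma app_two_nonempty {T} (a c d b : list T) x y :
  c <> [] -> d <> [] -> a ++ c ++ d ++ b = [x; y] -> a = [] /\ c = [x] /\ d = [y] /\ b = [].
Proof.
  intros Hc Hd H; destruct c as [|x' c]; [easy|]; destruct d as [|y' d]; [easy|].
  assert (Hlen := f_equal (@length T) H); rewrite !length_app in Hlen; simpl in Hlen.
  destruct a, c, d, b; try (simpl in Hlen; lia).
  now injection H as -> ->.
Qed.

Section Presentation.
Context {S : Type} {R : list S -> list S -> Prop}.

Local Notation "u ≡ v" := (Defs.equiv R u v) (at level 70).
Local Notation "w ≡± w'" := (equivpm R w w') (at level 70).

Local Instance equiv_Equivalence : Equivalence (Defs.equiv R).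
Proof. split; red; [apply eq_refl | apply eq_sym | apply eq_trans]. Qed.

Local Instance app_equiv_Proper :
  Proper (Defs.equiv R ==> Defs.equiv R ==> Defs.equiv R) (@app S).
Proof.
  assert (context : forall x y u v, u ≡ v -> x ++ u ++ y ≡ x ++ v ++ y).
  { intros x y u v H; induction H as [a b u v Huv|u|u v _ IH|u v w _ IH1 _ IH2].
    - generalize (eq_rel (x ++ a) (b ++ y) Huv); now rewrite <- !app_assoc.
    - reflexivity.
    - now symmetry.
    - now transitivity (x ++ v ++ y). }
  intros x x' Hx y y' Hy; transitivity (x' ++ y).
  - exact (context [] y x x' Hx).
  - generalize (context x' [] y y' Hy); now rewrite !app_nil_r.
Qed.

Lemma equiv_of_isrel {u v : list S} : isrel R u v -> u ≡ v.
Proof. intros H; generalize (eq_rel [] [] H); now rewrite !app_nil_r. Qed.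

Lemma equiv_nil : positive_presentation R -> forall u, [] ≡ u -> u = [].
Proof.
  intros [_ HR] u Hu.
  enough (Hiff : forall x y, x ≡ y -> (x = [] <-> y = [])) by now apply (Hiff _ _ Hu).
  intros x y H; induction H as [a b u' v' Huv| | |]; try tauto.
  assert (u' <> [] /\ v' <> []) as [Hu' Hv'] by (destruct Huv as [H|H]; apply HR in H; tauto).
  split; intros Hnil; apply app_eq_nil in Hnil as [_ Hnil]; apply app_eq_nil in Hnil; tauto.
Qed.

Lemma equiv_app_tail x y x' y' t : x ++ y ≡ x' ++ y' -> x ++ y ++ t ≡ x' ++ y' ++ t.
Proof. intros H; now rewrite !app_assoc, H. Qed.

Lemma pos_app (u v : list S) : pos (u ++ v) = pos u ++ pos v.
Proof. apply map_app. Qed.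

Lemma inv_app (u v : list S) : inv (u ++ v) = inv v ++ inv u.
Proof. unfold inv; now rewrite map_app, rev_app_distr. Qed.

Local Instance equivpm_Equivalence : Equivalence (equivpm R).
Proof. split; red; [apply eqpm_refl | apply eqpm_sym | apply eqpm_trans]. Qed.

Local Instance app_equivpm_Proper :
  Proper (equivpm R ==> equivpm R ==> equivpm R) (@app (sletter S)).
Proof.
  assert (context : forall x y w w', w ≡± w' -> x ++ w ++ y ≡± x ++ w' ++ y).
  { intros x y w w' H;
      induction H as [a b u v Huv|a b s|a b s|w|w w' _ IH|w1 w2 w3 _ IH1 _ IH2].
    - generalize (eqpm_rel (x ++ a) (b ++ y) Huv); now rewrite <- !app_assoc.
    - generalize (eqpm_cancel1 R (x ++ a) (b ++ y) s); now rewrite <- !app_assoc.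
    - generalize (eqpm_cancel2 R (x ++ a) (b ++ y) s); now rewrite <- !app_assoc.
    - reflexivity.
    - now symmetry.
    - now transitivity (x ++ w2 ++ y). }
  intros x x' Hx y y' Hy; transitivity (x' ++ y).
  - exact (context [] y x x' Hx).
  - generalize (context x' [] y y' Hy); now rewrite !app_nil_r.
Qed.

Lemma equivpm_pos {u v : list S} : u ≡ v -> pos u ≡± pos v.
Proof.
  intros H; induction H as [a b u v Huv|u|u v _ IH|u v w _ IH1 _ IH2].
  - rewrite !pos_app; apply eqpm_rel, Huv.
  - reflexivity.
  - now symmetry.
  - now transitivity (pos v).
Qed.

Lemma equivpm_pos_inv (u : list S) : pos u ++ inv u ≡± [].
Proof.
  induction u as [|s u IH]; [easy|].
  change (([Pos s] ++ pos u) ++ inv u ++ [Neg s] ≡± []).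
  rewrite <- app_assoc, (app_assoc (pos u)), IH; exact (eqpm_cancel1 R [] [] s).
Qed.

Lemma equivpm_inv_pos (u : list S) : inv u ++ pos u ≡± [].
Proof.
  induction u as [|s u IH]; [easy|].
  change ((inv u ++ [Neg s]) ++ [Pos s] ++ pos u ≡± []); rewrite <- app_assoc.
  rewrite (eqpm_cancel2 R (inv u) (pos u) s); exact IH.
Qed.

(** * Soundness of reversing *)

Lemma rstep_equivpm w w' : rstep R w w' -> w ≡± w'.
Proof.
  intros [a b u Hu | a b u v u' v' Hu Hv Huv].
  - now rewrite (app_assoc (inv u)), equivpm_inv_pos.
  - enough (Hred : inv u ++ pos v ≡± pos v' ++ inv u')
      by now rewrite (app_assoc (inv u)), Hred, <- app_assoc.
    rewrite <- (app_nil_r (pos v)), <- (equivpm_pos_inv u'), (app_assoc (pos v)), <- pos_app.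
    rewrite (equivpm_pos (symmetry (equiv_of_isrel Huv))), pos_app, !app_assoc.
    now rewrite equivpm_inv_pos.
Qed.

Lemma lstep_equivpm w w' : lstep R w w' -> w ≡± w'.
Proof.
  intros [a b u Hu | a b u v u' v' Hu Hv Huv].
  - now rewrite (app_assoc (pos u)), equivpm_pos_inv.
  - enough (Hred : pos u ++ inv v ≡± inv v' ++ pos u')
      by now rewrite (app_assoc (pos u)), Hred, <- app_assoc.
    rewrite <- (app_nil_l (pos u)), <- (equivpm_inv_pos v'), <- !app_assoc.
    rewrite (app_assoc (pos v')), <- pos_app.
    rewrite (equivpm_pos (equiv_of_isrel Huv)), pos_app, <- !app_assoc.
    now rewrite equivpm_pos_inv, app_nil_r.
Qed.

Lemma rrev_equivpm w w' : rrev R w w' -> w ≡± w'.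
Proof.
  induction 1 as [w w' Hstep|w|w1 w2 w3 _ IH1 _ IH2];
    [now apply rstep_equivpm | reflexivity | now transitivity w2].
Qed.

Lemma lrev_equivpm w w' : lrev R w w' -> w ≡± w'.
Proof.
  induction 1 as [w w' Hstep|w|w1 w2 w3 _ IH1 _ IH2];
    [now apply lstep_equivpm | reflexivity | now transitivity w2].
Qed.

(* [x w ≡ y] in S^*/≡, a letter [s^-1] being applicable only to words right-divisible by [s]. *)
Fixpoint evaluates_to (w : list (sletter S)) (x y : list S) : Prop :=
  match w with
  | [] => x ≡ y
  | Pos s :: w' => evaluates_to w' (x ++ [s]) y
  | Neg s :: w' => exists z, x ≡ z ++ [s] /\ evaluates_to w' z y
  end.

Lemma evaluates_to_equiv w x x' y : x ≡ x' -> evaluates_to w x y -> evaluates_to w x' y.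
Proof.
  revert x x'; induction w as [|[s|s] w IH]; simpl; intros x x' Hx.
  - now rewrite Hx.
  - apply IH; now rewrite Hx.
  - intros [z [Hz Hw]]; exists z; split; [now rewrite <- Hx | exact Hw].
Qed.

Lemma evaluates_to_app w1 w2 x y :
  evaluates_to (w1 ++ w2) x y <-> exists m, evaluates_to w1 x m /\ evaluates_to w2 m y.
Proof.
  revert x; induction w1 as [|[s|s] w1 IH]; simpl; intros x.
  - split; [now exists x | intros [m [Hm Hw]]; now apply (evaluates_to_equiv _ m)].
  - apply IH.
  - split.
    + intros [z [Hz Hw]]; apply IH in Hw as [m [H1 H2]]; eauto.
    + intros [m [[z [Hz H1]] H2]]; exists z; split; [exact Hz | apply IH; eauto].
Qed.

Lemma evaluates_to_pos u x y : evaluates_to (pos u) x y <-> x ++ u ≡ y.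
Proof.
  revert x; induction u as [|s u IH]; simpl; intros x.
  - now rewrite app_nil_r.
  - now rewrite IH, <- app_assoc.
Qed.

Lemma evaluates_to_inv u x y : evaluates_to (inv u) x y <-> x ≡ y ++ u.
Proof.
  revert x y; induction u as [|s u IH]; intros x y.
  - simpl; now rewrite app_nil_r.
  - change (inv (s :: u)) with (inv u ++ [Neg s]); rewrite evaluates_to_app; simpl.
    split.
    + intros [m [Hxm [z [Hmz Hzy]]]]; apply IH in Hxm.
      now rewrite Hxm, Hmz, Hzy, <- app_assoc.
    + intros Hx; exists (y ++ [s]); split.
      * apply IH; now rewrite <- app_assoc.
      * exists y; split; reflexivity.
Qed.

Lemma rstep_evaluates_to w w' x y :
  rstep R w w' -> evaluates_to w x y -> evaluates_to w' x y.
Proof.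
  intros Hstep Hw; destruct Hstep as [a b u Hu | a b u v u' v' Hu Hv Huv];
    apply evaluates_to_app in Hw as [m1 [Ha Hw]];
    apply evaluates_to_app in Hw as [m2 [Hm2 Hw]];
    apply evaluates_to_app in Hw as [m3 [Hm3 Hb]];
    apply evaluates_to_inv in Hm2; apply evaluates_to_pos in Hm3;
    apply evaluates_to_app; exists m1; split; try exact Ha.
  - apply (evaluates_to_equiv _ m3); [|exact Hb].
    now rewrite <- Hm3, Hm2.
  - apply evaluates_to_app; exists (m1 ++ v'); split; [now apply evaluates_to_pos|].
    apply evaluates_to_app; exists m3; split; [apply evaluates_to_inv | exact Hb].
    now rewrite <- Hm3, Hm2, <- !app_assoc, (equiv_of_isrel Huv).
Qed.

Lemma rrev_evaluates_to w w' x y :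
  rrev R w w' -> evaluates_to w x y -> evaluates_to w' x y.
Proof. induction 1; eauto using rstep_evaluates_to. Qed.

Lemma equiv_of_rrev_nil u v : rrev R (inv u ++ pos v) [] -> u ≡ v.
Proof.
  intros Hrev; apply (rrev_evaluates_to _ _ u v Hrev), evaluates_to_app.
  exists []; split; [now apply evaluates_to_inv | now apply evaluates_to_pos].
Qed.

(** * Normal forms and cancellativity *)

Lemma pos_eq_singleton (u : list S) t : pos u = [Pos t] -> u = [t].
Proof. destruct u as [|x [|y u]]; intros H; inversion H; reflexivity. Qed.

Lemma inv_eq_singleton (u : list S) s : inv u = [Neg s] -> u = [s].
Proof.
  unfold inv; intros H; apply (f_equal (@rev _)) in H; rewrite rev_involutive in H.
  destruct u as [|x [|y u]]; inversion H; reflexivity.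
Qed.

Lemma pos_inv_inj (v u v' u' : list S) : pos v ++ inv u = pos v' ++ inv u' -> v = v' /\ u = u'.
Proof.
  unfold pos, inv; rewrite <- !map_rev; intros H.
  apply map_app_map_inj in H as [-> H]; [|discriminate|congruence|congruence].
  split; [reflexivity | now apply rev_inj].
Qed.

Lemma inv_pos_inj (v u v' u' : list S) : inv v ++ pos u = inv v' ++ pos u' -> v = v' /\ u = u'.
Proof.
  unfold pos, inv; rewrite <- !map_rev; intros H.
  apply map_app_map_inj in H as [H ->]; [|discriminate|congruence|congruence].
  split; [now apply rev_inj | reflexivity].
Qed.

Lemma pos_inv_neq_neg_pos (v u : list S) a b s t : pos v ++ inv u <> a ++ Neg s :: Pos t :: b.
Proof. unfold pos, inv; rewrite <- map_rev; apply map_app_map_no_factor; discriminate. Qed.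

Lemma inv_pos_neq_pos_neg (v u : list S) a b s t : inv v ++ pos u <> a ++ Pos s :: Neg t :: b.
Proof. unfold pos, inv; rewrite <- map_rev; apply map_app_map_no_factor; discriminate. Qed.

Lemma rstep_source_factor w w' : rstep R w w' -> exists a b s t, w = a ++ Neg s :: Pos t :: b.
Proof.
  intros [a b u Hu | a b u v u' v' Hu Hv _];
    [destruct u as [|s u]; [easy|]; exists (a ++ inv u), (pos u ++ b), s, s
    |destruct u as [|s u], v as [|t v]; try easy; exists (a ++ inv u), (pos v ++ b), s, t];
    change (inv (s :: u)) with (inv u ++ [Neg s]); simpl; now rewrite <- !app_assoc.
Qed.

Lemma lstep_source_factor w w' : lstep R w w' -> exists a b s t, w = a ++ Pos s :: Neg t :: b.
Proof.
  intros [a b u Hu | a b u v u' v' Hu Hv _];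
    [destruct (exists_last Hu) as [u1 [s ->]]; exists (a ++ pos u1), (inv u1 ++ b), s, s
    |destruct (exists_last Hu) as [u1 [s ->]], (exists_last Hv) as [v1 [t ->]];
     exists (a ++ pos u1), (inv v1 ++ b), s, t];
    rewrite pos_app, inv_app; simpl; now rewrite <- !app_assoc.
Qed.

Lemma pos_inv_rrev_normal v u w : rrev R (pos v ++ inv u) w -> w = pos v ++ inv u.
Proof.
  intros H; apply clos_rt_rt1n in H; destruct H as [|w1 w2 Hstep _]; [reflexivity|].
  apply rstep_source_factor in Hstep as [a [b [s [t Hw]]]].
  destruct (pos_inv_neq_neg_pos _ _ _ _ _ _ Hw).
Qed.

Lemma inv_pos_lrev_normal v u w : lrev R (inv v ++ pos u) w -> w = inv v ++ pos u.
Proof.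
  intros H; apply clos_rt_rt1n in H; destruct H as [|w1 w2 Hstep _]; [reflexivity|].
  apply lstep_source_factor in Hstep as [a [b [s [t Hw]]]].
  destruct (inv_pos_neq_pos_neg _ _ _ _ _ _ Hw).
Qed.

Lemma inv_pos_eq_two_letters a b (u v : list S) s t : u <> [] -> v <> [] ->
  a ++ inv u ++ pos v ++ b = [Neg s; Pos t] -> a = [] /\ u = [s] /\ v = [t] /\ b = [].
Proof.
  intros Hu Hv H; apply app_two_nonempty in H as [-> [Hu' [Hv' ->]]].
  - now rewrite (inv_eq_singleton _ _ Hu'), (pos_eq_singleton _ _ Hv').
  - destruct u as [|x u]; [easy|]; change (inv (x :: u)) with (inv u ++ [Neg x]).
    now destruct (inv u).
  - now destruct v.
Qed.

Lemma pos_inv_eq_two_letters a b (u v : list S) s t : u <> [] -> v <> [] ->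
  a ++ pos u ++ inv v ++ b = [Pos s; Neg t] -> a = [] /\ u = [s] /\ v = [t] /\ b = [].
Proof.
  intros Hu Hv H; apply app_two_nonempty in H as [-> [Hu' [Hv' ->]]].
  - now rewrite (pos_eq_singleton _ _ Hu'), (inv_eq_singleton _ _ Hv').
  - now destruct u.
  - destruct v as [|x v]; [easy|]; change (inv (x :: v)) with (inv v ++ [Neg x]).
    now destruct (inv v).
Qed.

Lemma rstep_neg_pos s w :
  (forall u v, isrel R (s :: u) (s :: v) -> u = v) ->
  rstep R [Neg s; Pos s] w -> exists x, w = pos x ++ inv x.
Proof.
  intros HC Hstep; remember [Neg s; Pos s] as w0 eqn:Hw0.
  destruct Hstep as [a b u Hu | a b u v u' v' Hu Hv Huv].
  - apply inv_pos_eq_two_letters in Hw0 as [-> [_ [_ ->]]]; [|assumption..].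
    now exists [].
  - apply inv_pos_eq_two_letters in Hw0 as [-> [-> [-> ->]]]; [|assumption..].
    apply HC in Huv as ->; exists u'; now rewrite app_nil_r.
Qed.

Lemma lstep_pos_neg s w :
  (forall u v, isrel R (u ++ [s]) (v ++ [s]) -> u = v) ->
  lstep R [Pos s; Neg s] w -> exists x, w = inv x ++ pos x.
Proof.
  intros HC Hstep; remember [Pos s; Neg s] as w0 eqn:Hw0.
  destruct Hstep as [a b u Hu | a b u v u' v' Hu Hv Huv].
  - apply pos_inv_eq_two_letters in Hw0 as [-> [_ [_ ->]]]; [|assumption..].
    now exists [].
  - apply pos_inv_eq_two_letters in Hw0 as [-> [-> [-> ->]]]; [|assumption..].
    apply HC in Huv as ->; exists u'; now rewrite app_nil_r.
Qed.

Lemma rrev_neg_pos_normal s u v :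
  (forall u v, isrel R (s :: u) (s :: v) -> u = v) ->
  rrev R [Neg s; Pos s] (pos v ++ inv u) -> v = u.
Proof.
  intros HC Hrev; remember (pos v ++ inv u) as nf eqn:Hnf.
  apply clos_rt_rt1n in Hrev; destruct Hrev as [|w1 nf Hstep Hrest].
  - symmetry in Hnf; destruct (pos_inv_neq_neg_pos v u [] [] s s Hnf).
  - apply rstep_neg_pos in Hstep as [x ->]; [|exact HC].
    apply clos_rt1n_rt, pos_inv_rrev_normal in Hrest; rewrite Hnf in Hrest.
    now apply pos_inv_inj in Hrest as [-> ->].
Qed.

Lemma lrev_pos_neg_normal s u v :
  (forall u v, isrel R (u ++ [s]) (v ++ [s]) -> u = v) ->
  lrev R [Pos s; Neg s] (inv v ++ pos u) -> v = u.
Proof.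
  intros HC Hrev; remember (inv v ++ pos u) as nf eqn:Hnf.
  apply clos_rt_rt1n in Hrev; destruct Hrev as [|w1 nf Hstep Hrest].
  - symmetry in Hnf; destruct (inv_pos_neq_pos_neg v u [] [] s s Hnf).
  - apply lstep_pos_neg in Hstep as [x ->]; [|exact HC].
    apply clos_rt1n_rt, inv_pos_lrev_normal in Hrest; rewrite Hnf in Hrest.
    now apply inv_pos_inj in Hrest as [-> ->].
Qed.

Lemma equiv_cancel_l :
  (forall s u v, isrel R (s :: u) (s :: v) -> u = v) -> r_complete R ->
  forall a x y, a ++ x ≡ a ++ y -> x ≡ y.
Proof.
  intros HC Hrc a; induction a as [|s a IH]; intros x y Hxy; [exact Hxy|]; apply IH.
  destruct (Hrc [s] [s] (a ++ y) (a ++ x) Hxy) as [u'' [v'' [z [Hrev [Hy Hx]]]]].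
  apply rrev_neg_pos_normal in Hrev as ->; [|apply HC].
  now rewrite Hx, Hy.
Qed.

Lemma equiv_cancel_r :
  (forall s u v, isrel R (u ++ [s]) (v ++ [s]) -> u = v) -> l_complete R ->
  forall a x y, x ++ a ≡ y ++ a -> x ≡ y.
Proof.
  intros HC Hlc a; induction a as [|s a IH]; intros x y Hxy.
  - now rewrite !app_nil_r in Hxy.
  - change (x ++ [s] ++ a ≡ y ++ [s] ++ a) in Hxy; rewrite !app_assoc in Hxy.
    apply IH in Hxy.
    destruct (Hlc [s] [s] y x Hxy) as [u'' [v'' [z [Hrev [Hy Hx]]]]].
    apply lrev_pos_neg_normal in Hrev as ->; [|apply HC].
    now rewrite Hx, Hy.
Qed.

Lemma rrev_context a b w w' : rrev R w w' -> rrev R (a ++ w ++ b) (a ++ w' ++ b).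
Proof.
  induction 1 as [w w' Hstep|w|w1 w2 w3 _ IH1 _ IH2];
    [apply rt_step | apply rt_refl | now apply rt_trans with (a ++ w2 ++ b)].
  destruct Hstep as [a' b' u Hu | a' b' u v u' v' Hu Hv Huv];
    [generalize (rs_del R (a ++ a') (b' ++ b) Hu)
    |generalize (rs_rel (a ++ a') (b' ++ b) u' v' Hu Hv Huv)];
    now rewrite <- !app_assoc.
Qed.

Section CommonMultiples.
Variable P : list S -> Prop.
Hypothesis P_letter : forall s, P [s].
Hypothesis P_closed : forall u v, P u -> P v -> exists u' v', P u' /\ P v' /\ u ++ v' ≡ v ++ u'.

Lemma common_right_multiple_P u b : P u -> exists x y, u ++ x ≡ b ++ y.
Proof.
  revert u; induction b as [|s b IH]; intros u Hu.
  - exists [], u; now rewrite app_nil_r.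
  - destruct (P_closed u [s] Hu (P_letter s)) as [u' [v' [Hu' [_ Huv]]]].
    destruct (IH u' Hu') as [x [y Hxy]].
    exists (v' ++ x), y; change (u ++ v' ++ x ≡ [s] ++ b ++ y).
    now rewrite app_assoc, Huv, <- app_assoc, Hxy.
Qed.

Lemma common_right_multiple a b : exists x y, a ++ x ≡ b ++ y.
Proof.
  revert b; induction a as [|s a IH]; intros b.
  - exists b, []; now rewrite app_nil_r.
  - destruct (common_right_multiple_P [s] b (P_letter s)) as [x1 [y1 H1]].
    destruct (IH x1) as [x2 [y2 H2]].
    exists x2, (y1 ++ y2); change ([s] ++ a ++ x2 ≡ b ++ y1 ++ y2).
    now rewrite H2, app_assoc, H1, <- app_assoc.
Qed.

End CommonMultiples.

Lemma common_right_multiple_of_Er : cond_Er R -> forall a b, exists x y, a ++ x ≡ b ++ y.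
Proof.
  intros [P [P_letter P_closed]]; apply (common_right_multiple P P_letter).
  intros u v Hu Hv; destruct (P_closed u v Hu Hv) as [u' [v' [Hu' [Hv' Hrev]]]].
  exists u', v'; auto using equiv_of_rrev_nil.
Qed.

Lemma rrev_pos_inv_exists :
  (forall a b, exists x y, a ++ x ≡ b ++ y) -> r_complete R ->
  forall w, exists u v, rrev R w (pos v ++ inv u).
Proof.
  intros Hcm Hrc w; induction w as [|[s|s] w [u [v IH]]].
  - exists [], []; apply rt_refl.
  - exists u, (s :: v); generalize (rrev_context [Pos s] [] _ _ IH); now rewrite !app_nil_r.
  - destruct (Hcm [s] v) as [x [y Hxy]].
    destruct (Hrc [s] v y x Hxy) as [u'' [v'' [z [Hrev _]]]].
    exists (u ++ u''), v''; apply rt_trans with (Neg s :: pos v ++ inv u).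
    + generalize (rrev_context [Neg s] [] _ _ IH); now rewrite !app_nil_r.
    + rewrite inv_app, app_assoc; exact (rrev_context [] (inv u) _ _ Hrev).
Qed.

(** * Ore's embedding *)

Section Fractions.
Variable c : list S -> list S -> list S * list S.
Hypothesis c_spec : forall a b, a ++ fst (c a b) ≡ b ++ snd (c a b).
Hypothesis cancel_l : forall a x y, a ++ x ≡ a ++ y -> x ≡ y.

Definition frac_equiv (x y : list S * list S) : Prop :=
  exists a b, fst x ++ a ≡ fst y ++ b /\ snd x ++ a ≡ snd y ++ b.

Local Instance frac_equiv_Equivalence : Equivalence frac_equiv.
Proof.
  split.
  - intros x; exists [], []; split; reflexivity.
  - intros x y [a [b [Hp Hq]]]; exists b, a; split; now symmetry.
  - intros x y z [a [b [Hp Hq]]] [d [e [Hp' Hq']]].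
    pose proof (c_spec b d) as Hm; destruct (c b d) as [m n]; cbn [fst snd] in Hm.
    exists (a ++ m), (e ++ n); split.
    + now rewrite (equiv_app_tail _ _ _ _ m Hp), Hm, (equiv_app_tail _ _ _ _ n Hp').
    + now rewrite (equiv_app_tail _ _ _ _ m Hq), Hm, (equiv_app_tail _ _ _ _ n Hq').
Qed.

(* The pair [(p, q)] stands for the fraction [p q^-1], on which letters act on
   the left: [s^-1 p q^-1 = x (q y)^-1] for the chosen common multiple [s x ≡ p y]. *)
Definition frac_letter (l : sletter S) (x : list S * list S) : list S * list S :=
  match l with
  | Pos s => (s :: fst x, snd x)
  | Neg s => (fst (c [s] (fst x)), snd x ++ snd (c [s] (fst x)))
  end.

Definition frac_act (w : list (sletter S)) (x : list S * list S) : list S * list S :=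
  fold_right frac_letter x w.

Lemma frac_letter_equiv l x y : frac_equiv x y -> frac_equiv (frac_letter l x) (frac_letter l y).
Proof.
  destruct x as [p q], y as [p' q']; intros [a [b [Hp Hq]]]; cbn [fst snd] in Hp, Hq.
  destruct l as [s|s]; cbn.
  - exists a, b; split; [|exact Hq]; change ([s] ++ p ++ a ≡ [s] ++ p' ++ b); now rewrite Hp.
  - pose proof (c_spec [s] p) as C1; destruct (c [s] p) as [x1 y1].
    pose proof (c_spec [s] p') as C2; destruct (c [s] p') as [x2 y2].
    (* Common multiples of [y1] with [a], then of [y2] with [b n1], give the witnesses. *)
    pose proof (c_spec y1 a) as M1; destruct (c y1 a) as [m1 n1].
    pose proof (c_spec y2 (b ++ n1)) as M2; destruct (c y2 (b ++ n1)) as [m2 k].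
    cbn [fst snd] in *; rewrite <- app_assoc in M2.
    assert (K : y1 ++ m1 ++ k ≡ a ++ n1 ++ k) by now apply equiv_app_tail.
    exists (m1 ++ k), m2; cbn [fst snd]; rewrite <- !app_assoc; split.
    + apply (cancel_l [s]).
      rewrite (equiv_app_tail _ _ _ _ _ C1), K, (equiv_app_tail _ _ _ _ _ Hp), <- M2.
      now rewrite (equiv_app_tail _ _ _ _ _ C2).
    + now rewrite K, (equiv_app_tail _ _ _ _ _ Hq), <- M2.
Qed.

Lemma frac_act_equiv w x y : frac_equiv x y -> frac_equiv (frac_act w x) (frac_act w y).
Proof. induction w; intros H; [exact H | now apply frac_letter_equiv, IHw]. Qed.

Lemma frac_act_app w1 w2 x : frac_act (w1 ++ w2) x = frac_act w1 (frac_act w2 x).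
Proof. apply fold_right_app. Qed.

Lemma frac_act_pos u x : frac_act (pos u) x = (u ++ fst x, snd x).
Proof.
  induction u as [|s u IH]; [now destruct x|].
  change (frac_letter (Pos s) (frac_act (pos u) x) = (s :: u ++ fst x, snd x)).
  now rewrite IH.
Qed.

Lemma frac_letter_pos_neg s x : frac_equiv (frac_letter (Pos s) (frac_letter (Neg s) x)) x.
Proof.
  destruct x as [p q]; cbn; pose proof (c_spec [s] p) as C.
  destruct (c [s] p) as [x1 y1].
  exists [], y1; cbn in *; now rewrite !app_nil_r.
Qed.

Lemma frac_letter_neg_pos s x : frac_equiv (frac_letter (Neg s) (frac_letter (Pos s) x)) x.
Proof.
  destruct x as [p q]; cbn; pose proof (c_spec [s] (s :: p)) as C.
  destruct (c [s] (s :: p)) as [x1 y1].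
  exists [], y1; cbn in *; rewrite !app_nil_r; split; [now apply (cancel_l [s]) | reflexivity].
Qed.

Lemma frac_act_equivpm w w' x : w ≡± w' -> frac_equiv (frac_act w x) (frac_act w' x).
Proof.
  intros H; revert x; induction H as [a b u v Huv|a b s|a b s|w|w w' _ IH|w1 w2 w3 _ IH1 _ IH2];
    intros x; try rewrite !frac_act_app.
  - apply frac_act_equiv; rewrite !frac_act_pos; exists [], []; cbn.
    now rewrite (equiv_of_isrel Huv).
  - apply frac_act_equiv, frac_letter_pos_neg.
  - apply frac_act_equiv, frac_letter_neg_pos.
  - reflexivity.
  - now symmetry.
  - now transitivity (frac_act w2 x).
Qed.

Lemma equivpm_nil_common_multiple v u : pos v ++ inv u ≡± [] -> exists a, v ++ a ≡ u ++ a.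
Proof.
  intros H.
  assert (Hu : frac_equiv (frac_act (inv u) ([], [])) ([], u)).
  { transitivity (frac_act (inv u) (frac_act (pos u) ([], u))).
    - apply frac_act_equiv; rewrite frac_act_pos; exists u, []; cbn; now rewrite !app_nil_r.
    - rewrite <- frac_act_app; exact (frac_act_equivpm _ _ _ (equivpm_inv_pos u)). }
  apply (frac_act_equiv (pos v)) in Hu; rewrite (frac_act_pos v ([], u)) in Hu.
  pose proof (frac_act_equivpm _ _ ([], []) H) as Hvu; rewrite frac_act_app in Hvu.
  destruct (transitivity (symmetry Hu) Hvu) as [a [b [Hva Hua]]]; cbn in Hva, Hua.
  exists a; rewrite app_nil_r in Hva; now rewrite Hva, Hua.
Qed.

End Fractions.

Lemma equiv_of_equivpm_pos_inv_nil :
  (forall a b, exists x y, a ++ x ≡ b ++ y) ->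
  (forall a x y, a ++ x ≡ a ++ y -> x ≡ y) ->
  (forall a x y, x ++ a ≡ y ++ a -> x ≡ y) ->
  forall v u, pos v ++ inv u ≡± [] -> v ≡ u.
Proof.
  intros Hcm Hcancel_l Hcancel_r v u H.
  destruct (functional_choice (fun ab xy => fst ab ++ fst xy ≡ snd ab ++ snd xy))
    as [c c_spec].
  { intros [a b]; destruct (Hcm a b) as [x [y Hxy]]; now exists (x, y). }
  destruct (equivpm_nil_common_multiple (fun a b => c (a, b)) (fun a b => c_spec (a, b))
              Hcancel_l v u H) as [a Ha].
  exact (Hcancel_r a v u Ha).
Qed.

Lemma equivpm_nil_of_rrev_pos_inv w u v : rrev R w (pos v ++ inv u) -> u ≡ v -> w ≡± [].
Proof.
  intros Hw Huv; rewrite (rrev_equivpm _ _ Hw), <- (equivpm_pos Huv).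
  apply equivpm_pos_inv.
Qed.

Lemma rrev_pos_inv_of_equivpm_nil :
  r_complete R -> l_complete R -> cond_C R -> cond_Er R ->
  forall w, w ≡± [] -> exists u v, rrev R w (pos v ++ inv u) /\ u ≡ v.
Proof.
  intros Hrc Hlc [HCl HCr] HEr w Hw.
  pose proof (common_right_multiple_of_Er HEr) as Hcm.
  destruct (rrev_pos_inv_exists Hcm Hrc w) as [u [v Hrev]].
  exists u, v; split; [exact Hrev|]; symmetry.
  apply (equiv_of_equivpm_pos_inv_nil Hcm (equiv_cancel_l HCl Hrc) (equiv_cancel_r HCr Hlc)).
  now rewrite <- (rrev_equivpm _ _ Hrev).
Qed.

Lemma rrev_inv_pos_nil_of_equiv :
  positive_presentation R -> r_complete R -> forall u v, u ≡ v -> rrev R (inv u ++ pos v) [].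
Proof.
  intros HP Hrc u v Huv.
  destruct (Hrc u v [] []) as [u'' [v'' [z [Hrev [Hu Hv]]]]]; [now rewrite !app_nil_r|].
  apply (equiv_nil HP), app_eq_nil in Hu as [-> _].
  apply (equiv_nil HP), app_eq_nil in Hv as [-> _].
  exact Hrev.
Qed.

Lemma lrev_pos_inv_nil_of_equiv :
  positive_presentation R -> l_complete R -> forall u v, u ≡ v -> lrev R (pos v ++ inv u) [].
Proof.
  intros HP Hlc u v Huv.
  destruct (Hlc v u [] []) as [u'' [v'' [z [Hrev [Hu Hv]]]]]; [easy|].
  apply (equiv_nil HP), app_eq_nil in Hu as [_ ->].
  apply (equiv_nil HP), app_eq_nil in Hv as [_ ->].
  exact Hrev.
Qed.

End Presentation.

Theorem proposition7p6 (S : Type) (R : list S -> list S -> Prop) :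
  positive_presentation R -> complete R -> cond_C R -> cond_Er R ->
  forall w : list (sletter S),
    (equivpm R w [] <->
       exists u v, rrev R w (pos v ++ inv u) /\ rrev R (inv u ++ pos v) []) /\
    (equivpm R w [] <->
       exists u v, rrev R w (pos v ++ inv u) /\ lrev R (pos v ++ inv u) []).
Proof.
  intros HP [Hrc Hlc] HC HEr w.
  pose proof (rrev_pos_inv_of_equivpm_nil Hrc Hlc HC HEr w) as Hnormal.
  split; split.
  - intros Hw; destruct (Hnormal Hw) as [u [v [Hrev Huv]]]; exists u, v.
    split; [exact Hrev | now apply rrev_inv_pos_nil_of_equiv].
  - intros [u [v [Hrev Hnil]]].
    now apply (equivpm_nil_of_rrev_pos_inv w u v Hrev), equiv_of_rrev_nil.
  - intros Hw; destruct (Hnormal Hw) as [u [v [Hrev Huv]]]; exists u, v.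
    split; [exact Hrev | now apply lrev_pos_inv_nil_of_equiv].
  - intros [u [v [Hrev Hnil]]].
    apply eqpm_trans with (pos v ++ inv u); [now apply rrev_equivpm | now apply lrev_equivpm].
Qed.
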